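(* If there exists a skew Room frame of type $t^u$, then there exists a $[2,2]$-GDC$(6)$ of type $(6t)^u$ with size $6t^2u(u-1)$.
   Context: Let $S$ be a finite set with a partition $\{S_1,\dots,S_n\}$. An $\{S_1,\dots,S_n\}$-Room frame is an $|S|\times|S|$ array $F$ indexed by $S$ such that: (1) every cell is empty or contains an unordered pair of symbols of $S$; (2) the subarrays $S_i\times S_i$ are empty; (3) each symbol $x\notin S_i$ occurs exactly once in row $s$ and exactly once in column $s$ for every $s\in S_i$; (4) the pairs occurring in $F$ are exactly those $\{s,t\}$ with $(s,t)\in (S\times S)\setminus\bigcup_i(S_i\times S_i)$. It has type $t^u$ if there are $u$ parts, each of size $t$. It is skew if whenever cell $(i,j)$ is filled, cell $(j,i)$ is empty. Ternary codes: a ternary code on a finite set $X$ is a subset $\mathcal C\subseteq\mathbb Z_3^X$; Hamming distance between $u,v$ is $|\{x:u_x\neq v_x\}|$; $u$ has composition $[w_1,w_2]$ if exactly $w_1$ coordinates equal $1$ and exactly $w_2$ equal $2$. A $[w_1,w_2]$-GDC$(d)$ is a triple $(X,\mathcal G,\mathcal C)$ where $\mathcal G$ is a partition of $X$ into groups and $\mathcal C\subseteq\mathbb Z_3^X$ is such that every codeword has composition $[w_1,w_2]$, any two distinct codewords have Hamming distance at least $d$, and every codeword has at most one nonzero coordinate in each group. Its type is the multiset of group sizes, written in exponential notation ($g_1^{t_1}\cdots g_s^{t_s}$ means $t_i$ groups of size $g_i$); its size is $|\mathcal C|$. *)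

From mathcomp Require Import all_boot.
Set Implicit Arguments. Unset Strict Implicit. Unset Printing Implicit Defensive.

(* Partition {S_1,...,S_n} of a finite set S: a finset partition P of [set: S]
   (blocks nonempty, pairwise disjoint, covering S).  "Same part" is
   pblock P s == pblock P s'. *)
Definition same_part (S : finType) (P : {set {set S}}) (s s' : S) : bool :=
  pblock P s == pblock P s'.

Definition has_type (X : finType) (P : {set {set X}}) (g u : nat) : Prop :=
  #|P| = u /\ forall B, B \in P -> #|B| = g.

(* An array indexed by S x S whose cells are empty (None) or contain a set. *)
Definition room_frame (S : finType) (P : {set {set S}})
    (F : S -> S -> option {set S}) : Prop :=
  [/\
      (forall s t p, F s t = Some p -> #|p| = 2),
      (forall s t, same_part P s t -> F s t = None),
      (* (3) each symbol x not in the part of s occurs exactly once in row s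
             and exactly once in column s *)
      (forall s x, ~~ same_part P s x ->
         #|[set c | if F s c is Some p then x \in p else false]| = 1 /\
         #|[set r | if F r s is Some p then x \in p else false]| = 1) &
      (* (4) the pairs occurring in F are exactly the {s,t} with s, t in
             different parts *)
      (forall p, (exists r c, F r c = Some p) <->
         (exists s t, ~~ same_part P s t /\ p = [set s; t]))].

Definition skew (S : finType) (F : S -> S -> option {set S}) : Prop :=
  forall i j, F i j <> None -> F j i = None.

(* Ternary codes: alphabet Z_3 represented by 'I_3 (values 0,1,2). *)
Definition hamming (X : finType) (u v : {ffun X -> 'I_3}) : nat :=
  #|[set x | u x != v x]|.

Definition has_composition (X : finType) (u : {ffun X -> 'I_3}) (w1 w2 : nat)
  : Prop :=
  #|[set x | val (u x) == 1]| = w1 /\ #|[set x | val (u x) == 2]| = w2.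

Definition is_GDC (X : finType) (G : {set {set X}}) (C : {set {ffun X -> 'I_3}})
    (w1 w2 d : nat) : Prop :=
  [/\ partition G [set: X],
      (forall c, c \in C -> has_composition c w1 w2),
      (forall c c', c \in C -> c' \in C -> c != c' -> d <= hamming c c') &
      (forall c B, c \in C -> B \in G -> #|[set x in B | val (c x) != 0]| <= 1)].

From mathcomp Require Import all_boot zify.
Set Implicit Arguments. Unset Strict Implicit. Unset Printing Implicit Defensive.

(* Put X = S x Z_6 with groups S_i x Z_6. A filled cell (r, c) of the skew Room
   frame, containing {x, y}, together with b : bool and j : Z_6 gives the codeword
   with support (r, j), (c, j + 3), (x, j + o), (y, j + o), where o = 4 and the
   entries are 2, 2, 1, 1 if b holds, and o = 1 with entries 1, 1, 2, 2 otherwise.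
   The four symbols r, c, x, y lie in distinct parts, which gives the group
   condition and composition [2, 2].
   Counting the symbols of each row shows that a cell's symbols avoid the parts of
   its row and column and that every pair from different parts occurs in exactly
   one cell. Hence an ordered pair of symbols determines the cell of a block that
   contains it from its "class" (the cell's pair, its two indices, its row index
   and a symbol, or its column index and a symbol). A finite check over all class
   patterns shows that two distinct codewords share at most two support points and
   disagree on both when they share two, so their distance is at least 6. Finally
   2 |filled cells| = ut (ut - t), which gives 12 |filled cells| = 6 t^2 u (u - 1)
   codewords. *)

Section SamePart.
Variables (S : finType) (P : {set {set S}}).

Lemma same_partxx s : same_part P s s.
Proof. exact: eqxx. Qed.

Lemma same_partC s t : same_part P s t = same_part P t s.
Proof. exact: eq_sym. Qed.

Lemma same_part_mem B s t :
  trivIset P -> B \in P -> s \in B -> t \in B -> same_part P s t.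
Proof. by move=> trivP PB sB tB; rewrite /same_part !(def_pblock trivP PB). Qed.

Definition cross := [set st : S * S | ~~ same_part P st.1 st.2].

Lemma card_cross_rows : #|cross| = \sum_s \sum_(x | ~~ same_part P s x) 1.
Proof. by rewrite pair_big_dep sum1dep_card; apply: eq_card => -[s x]; rewrite !inE. Qed.

End SamePart.

Definition transpose (S : finType) (F : S -> S -> option {set S}) r c := F c r.

Lemma room_frame_transpose (S : finType) (P : {set {set S}}) F :
  room_frame P F -> room_frame P (transpose F).
Proof.
case=> pairF diagF symF cellsF; split=> [s t p|s t|s x|p].
- exact: pairF.
- by rewrite same_partC => /diagF.
- by case/symF.
- rewrite -cellsF; split=> [] [r [c E]]; by exists c, r.
Qed.

Lemma skew_transpose (S : finType) (F : S -> S -> option {set S}) :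
  skew F -> skew (transpose F).
Proof. by move=> skF i j; apply: skF. Qed.

Section RowSymbols.
Variables (S : finType) (P : {set {set S}}) (F : S -> S -> option {set S}).
Hypotheses (frameF : room_frame P F) (skewF : skew F).
Local Notation sp := (same_part P).

Definition in_cell r c x := if F r c is Some p then x \in p else false.
Definition filled := [set rc : S * S | F rc.1 rc.2 != None].

Lemma cell_pair_card r c p : F r c = Some p -> #|p| = 2.
Proof. by case: frameF => pairF _ _ _; exact: pairF. Qed.

Lemma cell_diag r c : sp r c -> F r c = None.
Proof. by case: frameF => _ diagF _ _; exact: diagF. Qed.

Lemma card_row_symbol r x : ~~ sp r x -> #|[set c | in_cell r c x]| = 1.
Proof. by case: frameF => _ _ symF _ /symF []. Qed.

Lemma leq_filled_cross : 2 * #|filled| <= #|cross P|.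
Proof.
pose swap (st : S * S) := (st.2, st.1).
have swap_inj : injective swap by case=> a b [c d] [-> ->].
have filled_swap : [disjoint filled & swap @: filled].
  rewrite -setI_eq0; apply/eqP/setP => -[r c]; rewrite !inE /=.
  apply/andP => -[Frc /imsetP [[c' r'] Fcr [rr cc]]]; subst r' c'.
  by move: Fcr; rewrite inE /= skewF ?eqxx //; apply/eqP.
rewrite mul2n -addnn -{2}(card_imset filled swap_inj) -cardsUI.
rewrite (disjoint_setI0 filled_swap) cards0 addn0.
apply/subset_leq_card/subsetP => -[r c]; rewrite !inE /=.
case/orP => [Frc | /imsetP [[c' r'] Fcr [rr cc]]]; subst.
  by apply: contra Frc => /cell_diag ->.
by move: Fcr; rewrite inE same_partC; apply: contra => /cell_diag ->.
Qed.

Definition row_off_symbols (rc : S * S) :=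
  #|[set x | in_cell rc.1 rc.2 x && ~~ sp rc.1 x]|.

Lemma sum_row_off_symbols : \sum_rc row_off_symbols rc = #|cross P|.
Proof.
rewrite card_cross_rows -(pair_bigA _ (fun r c => row_off_symbols (r, c))) /=.
apply: eq_bigr => r _; rewrite /row_off_symbols /=.
under eq_bigr do rewrite -sum1dep_card.
rewrite (exchange_big_dep (fun x => ~~ sp r x)) /=; last by move=> c x _ /andP [].
apply: eq_bigr => x offx.
by rewrite sum1dep_card -(card_row_symbol offx); apply: eq_card => c; rewrite !inE offx andbT.
Qed.

Lemma row_off_symbols_le rc : row_off_symbols rc <= 2 * (rc \in filled).
Proof.
rewrite /row_off_symbols inE /in_cell; case E: (F rc.1 rc.2) => [p|] /=.
  rewrite muln1 -(cell_pair_card E); apply/subset_leq_card/subsetP => x.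
  by rewrite inE => /andP [].
by rewrite leqn0 cards_eq0; apply/eqP/setP => x; rewrite !inE.
Qed.

Lemma sum_filled : \sum_rc 2 * (rc \in filled) = 2 * #|filled|.
Proof.
rewrite -sum1_card big_distrr [RHS]big_mkcond /=.
by apply: eq_bigr => rc _; case: (rc \in filled).
Qed.

Lemma card_filled : 2 * #|filled| = #|cross P|.
Proof.
apply/eqP; rewrite eqn_leq leq_filled_cross -sum_row_off_symbols -sum_filled.
by apply: leq_sum => rc _; exact: row_off_symbols_le.
Qed.

(* Axiom (3) alone allows symbols of the row's own part; the count excludes them. *)
Lemma row_off_symbols_filled rc : rc \in filled -> row_off_symbols rc = 2.
Proof.
have [_] := leqif_sum (fun rc (_ : true) => leqif_eq (row_off_symbols_le rc)).
rewrite sum_row_off_symbols sum_filled card_filled eqxx => /esym/forallP/(_ rc).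
by move=> /= /eqP -> ->.
Qed.

Lemma cell_symbol_off_row r c p x : F r c = Some p -> x \in p -> ~~ sp r x.
Proof.
move=> E px; have : (r, c) \in filled by rewrite inE /= E.
move/row_off_symbols_filled; rewrite /row_off_symbols /in_cell /= E -(cell_pair_card E).
rewrite setIdE => /subset_cardP/(_ (subsetIl _ _))/(_ x).
by rewrite !inE px => /esym.
Qed.

Lemma row_cell_unique r c c' p p' x :
  F r c = Some p -> F r c' = Some p' -> x \in p -> x \in p' -> c = c'.
Proof.
move=> E E' px px'.
have /eqP/cards1P [c0 row_x] := card_row_symbol (cell_symbol_off_row E px).
have : c \in [set c | in_cell r c x] by rewrite inE /in_cell E.
have : c' \in [set c | in_cell r c x] by rewrite inE /in_cell E'.
by rewrite row_x !inE => /eqP -> /eqP ->.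
Qed.

End RowSymbols.

Section RoomFrame.
Variables (S : finType) (P : {set {set S}}) (F : S -> S -> option {set S}).
Hypotheses (frameF : room_frame P F) (skewF : skew F).
Local Notation sp := (same_part P).

Lemma cell_symbol_off_col r c p x : F r c = Some p -> x \in p -> ~~ sp c x.
Proof.
exact: (cell_symbol_off_row (room_frame_transpose frameF) (skew_transpose skewF)).
Qed.

Lemma cell_off_diag r c p : F r c = Some p -> ~~ sp r c.
Proof. by move=> E; apply: contraL isT => /(cell_diag frameF); rewrite E. Qed.

Lemma cell_pairE r c p : F r c = Some p -> exists x y, ~~ sp x y /\ p = [set x; y].
Proof. by case: frameF => _ _ _ cellsF E; apply/cellsF; exists r, c. Qed.

Lemma cell_pair_eq r c p x y :
  F r c = Some p -> x \in p -> y \in p -> x != y -> p = [set x; y].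
Proof.
move=> E px py xy; apply/eqP; rewrite eq_sym eqEcard (cell_pair_card frameF E) cards2 xy.
by rewrite andbT; apply/subsetP => z; rewrite !inE => /orP [] /eqP ->.
Qed.

Lemma col_cell_unique r r' c p p' x :
  F r c = Some p -> F r' c = Some p' -> x \in p -> x \in p' -> r = r'.
Proof.
move=> E E'.
exact: (row_cell_unique (room_frame_transpose frameF) (skew_transpose skewF) (r := c) E E').
Qed.

Definition cross_pairs := [set [set st.1; st.2] | st in cross P].

Lemma cell_contents : (fun rc => odflt set0 (F rc.1 rc.2)) @: filled F = cross_pairs.
Proof.
apply/setP => p; apply/imsetP/imsetP => [[[r c]]|[[s t]]].
  rewrite inE /=; case E: (F r c) => [q|] //= _ ->.
  by have [x [y [xy ->]]] := cell_pairE E; exists (x, y); rewrite ?inE.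
rewrite inE /= => st ->.
have [r [c E]] : exists r c, F r c = Some [set s; t].
  by case: frameF => _ _ _ cellsF; apply/cellsF; exists s, t.
by exists (r, c); rewrite ?inE /= E.
Qed.

Lemma leq_cross_pairs : #|cross P| <= 2 * #|cross_pairs|.
Proof.
rewrite -sum1_card (partition_big_imset (fun st : S * S => [set st.1; st.2])) /=.
rewrite -sum1_card big_distrr /=; apply: leq_sum => _ /imsetP [[a b] _ ->] /=.
rewrite muln1 sum1dep_card.
apply: (@leq_trans #|[set (a, b); (b, a)]|); last by rewrite cards2 ltnS leq_b1.
apply/subset_leq_card/subsetP => -[x y]; rewrite !inE /= => /andP [xy /eqP xyE].
have : x \in [set a; b] by rewrite -xyE !inE eqxx.
have : y \in [set a; b] by rewrite -xyE !inE eqxx orbT.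
rewrite !inE => /orP [] /eqP ey /orP [] /eqP ex; subst x y;
  rewrite ?eqxx ?orbT //; by rewrite same_partxx in xy.
Qed.

(* Axiom (4) only says that every pair occurs; the count makes it occur once. *)
Lemma cell_unique r c r' c' p :
  F r c = Some p -> F r' c' = Some p -> (r, c) = (r', c').
Proof.
pose content rc := odflt set0 (F rc.1 rc.2).
have : {in filled F &, injective content}.
  apply/imset_injP; rewrite eqn_leq leq_imset_card cell_contents.
  by rewrite -(leq_pmul2l (isT : 0 < 2)) (card_filled frameF skewF) leq_cross_pairs.
by move=> content_inj E E'; apply: content_inj; rewrite ?inE /content /= ?E ?E'.
Qed.

Lemma cell_pair_unique r c r' c' p p' x y :
  F r c = Some p -> F r' c' = Some p' ->
  x \in p -> y \in p -> x \in p' -> y \in p' -> x != y -> (r, c) = (r', c').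
Proof.
move=> E E' px py px' py' xy; apply: (cell_unique E).
by rewrite E' (cell_pair_eq E' px' py' xy) (cell_pair_eq E px py xy).
Qed.

Lemma cell_skew r c p q : F r c = Some p -> F c r = Some q -> False.
Proof. by move=> E; rewrite skewF // E. Qed.

End RoomFrame.

(* Finite quantifiers over lists of naturals rather than over ordinals, whose
   enumeration does not reduce under vm_compute. *)
Definition forall_below n (Q : pred nat) := all Q (iota 0 n).
Definition forall_bool (Q : pred bool) := Q true && Q false.

Lemma forall_belowP n Q : forall_below n Q -> forall a, a < n -> Q a.
Proof. by move/allP => allQ a lt_an; apply: allQ; rewrite mem_iota. Qed.

Lemma forall_boolP Q : forall_bool Q -> forall b, Q b.
Proof. by case/andP => ? ? []. Qed.

(* Roles 0, 1, 2 stand for the row index, the column index and a symbol of a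
   cell; a codeword puts the role-a element of its block in column
   [slot a b j] with entry [entry a b]. *)
Definition offset (a : nat) (b : bool) : nat :=
  match a with 0 => 0 | 1 => 3 | _ => if b then 4 else 1 end.

Definition slot (a : nat) (b : bool) (j : nat) : nat := (j + offset a b) %% 6.

Definition entry (a : nat) (b : bool) : nat := if (a == 2) == b then 1 else 2.

Definition valid_roles (a1 a2 : nat) := (a1 != a2) || (a1 == 2).

(* The six kinds of pairs in a block; {r, c} is one class in both orders because
   by skewness (r, c) and (c, r) are never both filled. Invalid role pairs get 6. *)
Definition pair_class (a1 a2 : nat) : nat :=
  match a1, a2 with
  | 2, 2 => 0 | 0, 1 | 1, 0 => 1 | 0, 2 => 2 | 2, 0 => 3 | 1, 2 => 4 | 2, 1 => 5
  | _, _ => 6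
  end.

Definition pair_pattern_ok a1 a2 a1' a2' b j b' j' :=
  [&& valid_roles a1 a2, valid_roles a1' a2',
      [&& a1 == a1', a2 == a2' & (b, j) != (b', j')]
        || (pair_class a1 a2 != pair_class a1' a2'),
      slot a1 b j == slot a1' b' j' & slot a2 b j == slot a2' b' j']
  ==> (entry a1 b != entry a1' b').

Lemma pair_pattern_check :
  forall_below 3 (fun a1 => forall_below 3 (fun a2 =>
  forall_below 3 (fun a1' => forall_below 3 (fun a2' =>
  forall_bool (fun b => forall_below 6 (fun j =>
  forall_bool (fun b' => forall_below 6 (fun j' =>
    pair_pattern_ok a1 a2 a1' a2' b j b' j')))))))).
Proof. by vm_compute. Qed.

Definition all_sym a1 a2 a3 := [&& a1 == 2, a2 == 2 & a3 == 2].

Definition triple_pattern_ok a1 a2 a3 a1' a2' a3' b j b' j' :=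
  [&& valid_roles a1 a2, valid_roles a1 a3, valid_roles a2 a3,
      valid_roles a1' a2', valid_roles a1' a3', valid_roles a2' a3',
      ~~ all_sym a1 a2 a3, ~~ all_sym a1' a2' a3' &
      [&& a1 == a1', a2 == a2', a3 == a3' & (b, j) != (b', j')]
        || [&& pair_class a1 a2 != pair_class a1' a2',
               pair_class a1 a3 != pair_class a1' a3'
             & pair_class a2 a3 != pair_class a2' a3']]
  ==> ~~ [&& slot a1 b j == slot a1' b' j', slot a2 b j == slot a2' b' j'
           & slot a3 b j == slot a3' b' j'].

Lemma triple_pattern_check :
  forall_below 3 (fun a1 => forall_below 3 (fun a2 => forall_below 3 (fun a3 =>
  forall_below 3 (fun a1' => forall_below 3 (fun a2' => forall_below 3 (fun a3' =>
  forall_bool (fun b => forall_below 6 (fun j =>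
  forall_bool (fun b' => forall_below 6 (fun j' =>
    triple_pattern_ok a1 a2 a3 a1' a2' a3' b j b' j')))))))))).
Proof. by vm_compute. Qed.

Lemma pair_pattern a1 a2 a1' a2' b j b' j' :
  a1 < 3 -> a2 < 3 -> a1' < 3 -> a2' < 3 -> j < 6 -> j' < 6 ->
  pair_pattern_ok a1 a2 a1' a2' b j b' j'.
Proof.
move=> h1 h2 h1' h2' hj hj'.
by move: pair_pattern_check => /forall_belowP/(_ a1 h1)/forall_belowP/(_ a2 h2)
  /forall_belowP/(_ a1' h1')/forall_belowP/(_ a2' h2')/forall_boolP/(_ b)
  /forall_belowP/(_ j hj)/forall_boolP/(_ b')/forall_belowP/(_ j' hj').
Qed.

Lemma triple_pattern a1 a2 a3 a1' a2' a3' b j b' j' :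
  a1 < 3 -> a2 < 3 -> a3 < 3 -> a1' < 3 -> a2' < 3 -> a3' < 3 -> j < 6 -> j' < 6 ->
  triple_pattern_ok a1 a2 a3 a1' a2' a3' b j b' j'.
Proof.
move=> h1 h2 h3 h1' h2' h3' hj hj'.
by move: triple_pattern_check => /forall_belowP/(_ a1 h1)/forall_belowP/(_ a2 h2)
  /forall_belowP/(_ a3 h3)/forall_belowP/(_ a1' h1')/forall_belowP/(_ a2' h2')
  /forall_belowP/(_ a3' h3')/forall_boolP/(_ b)/forall_belowP/(_ j hj)
  /forall_boolP/(_ b')/forall_belowP/(_ j' hj').
Qed.

Definition block (S : finType) (r c : S) (p : {set S}) := [set r; c] :|: p.

Definition role (S : finType) (r c s : S) : nat :=
  if s == r then 0 else if s == c then 1 else 2.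

Variant role_spec (S : finType) (r c : S) (p : {set S}) (s : S) : nat -> Type :=
  | RoleRow of s = r : role_spec r c p s 0
  | RoleCol of s = c : role_spec r c p s 1
  | RoleSym of s \in p : role_spec r c p s 2.

Lemma roleP (S : finType) (r c s : S) p : s \in block r c p -> role_spec r c p s (role r c s).
Proof.
rewrite /role !inE; case: eqP => [->|_]; first by constructor.
by case: eqP => [->|_] /= sp; constructor.
Qed.

Lemma role_lt3 (S : finType) (r c s : S) : role r c s < 3.
Proof. by rewrite /role; case: (s == r); case: (s == c). Qed.

Lemma block_valid_roles (S : finType) (r c : S) p s1 s2 :
  s1 \in block r c p -> s2 \in block r c p -> s1 != s2 ->
  valid_roles (role r c s1) (role r c s2).
Proof.
move=> b1 b2; case: (roleP b1) => [e1|e1|_]; case: (roleP b2) => [e2|e2|_] //.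
all: by rewrite e1 e2 eqxx.
Qed.

Section Blocks.
Variables (S : finType) (P : {set {set S}}) (F : S -> S -> option {set S}).
Hypotheses (frameF : room_frame P F) (skewF : skew F).
Local Notation sp := (same_part P).

Lemma cell_row_notin r c p : F r c = Some p -> r \notin p.
Proof.
by move=> E; apply/negP => /(cell_symbol_off_row frameF skewF E); rewrite same_partxx.
Qed.

Lemma cell_col_notin r c p : F r c = Some p -> c \notin p.
Proof.
by move=> E; apply/negP => /(cell_symbol_off_col frameF skewF E); rewrite same_partxx.
Qed.

Lemma cell_neq r c p : F r c = Some p -> r != c.
Proof.
by move=> E; apply: contraNneq (cell_off_diag frameF E) => ->; rewrite same_partxx.
Qed.

Lemma card_block r c p : F r c = Some p -> #|block r c p| = 4.
Proof.
move=> E; rewrite cardsU cards2 (cell_pair_card frameF E).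
have -> : [set r; c] :&: p = set0.
  apply/setP => s; rewrite !inE; apply/negbTE/negP => /andP [/orP [] /eqP -> ps].
    by move: (cell_row_notin E); rewrite ps.
  by move: (cell_col_notin E); rewrite ps.
by rewrite (cell_neq E) cards0.
Qed.

Lemma block_off_part r c p s s' : F r c = Some p ->
  s \in block r c p -> s' \in block r c p -> s != s' -> ~~ sp s s'.
Proof.
move=> E bs bs'.
have rc := cell_off_diag frameF E.
have row x : x \in p -> ~~ sp r x := cell_symbol_off_row frameF skewF E.
have col x : x \in p -> ~~ sp c x := cell_symbol_off_col frameF skewF E.
have [x [y [xy pE]]] := cell_pairE frameF E.
case: (roleP bs) => [->|->|ps]; case: (roleP bs') => [->|->|ps'];
  rewrite ?eqxx // => ss'.
- exact: row.
- by rewrite same_partC.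
- exact: col.
- by rewrite same_partC row.
- by rewrite same_partC col.
- by move: ps ps' ss'; rewrite pE !inE => /orP [] /eqP -> /orP [] /eqP ->;
    rewrite ?eqxx // same_partC.
Qed.

Lemma block_not_all_sym r c p s1 s2 s3 : F r c = Some p ->
  s1 \in block r c p -> s2 \in block r c p -> s3 \in block r c p ->
  s1 != s2 -> s1 != s3 -> s2 != s3 -> ~~ all_sym (role r c s1) (role r c s2) (role r c s3).
Proof.
move=> E b1 b2 b3 n12 n13 n23.
case: (roleP b1) => // [p1]; case: (roleP b2) => // [p2]; case: (roleP b3) => // [p3].
move: p3; rewrite (cell_pair_eq frameF E p1 p2 n12) !inE ![s3 == _]eq_sym.
by rewrite (negbTE n13) (negbTE n23).
Qed.

Lemma pair_class_cell r c p r' c' p' s1 s2 : F r c = Some p -> F r' c' = Some p' ->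
  s1 \in block r c p -> s2 \in block r c p ->
  s1 \in block r' c' p' -> s2 \in block r' c' p' -> s1 != s2 ->
  pair_class (role r c s1) (role r c s2) = pair_class (role r' c' s1) (role r' c' s2) ->
  (r, c) = (r', c').
Proof.
move=> E E' b1 b2 b1' b2' s12.
case: (roleP b1) => [e1|e1|p1]; case: (roleP b2) => [e2|e2|p2];
case: (roleP b1') => [e1'|e1'|p1']; case: (roleP b2') => [e2'|e2'|p2'] //= _.
all: subst; first
  [ by rewrite eqxx in s12
  | done
  | by case: (cell_skew skewF E E')
  | exact: (cell_pair_unique frameF skewF E E' p1 p2 p1' p2' s12)
  | by rewrite (row_cell_unique frameF skewF E E' p2 p2')
  | by rewrite (row_cell_unique frameF skewF E E' p1 p1')
  | by rewrite (col_cell_unique frameF skewF E E' p2 p2')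
  | by rewrite (col_cell_unique frameF skewF E E' p1 p1')
  ].
Qed.
End Blocks.

Definition support (X : finType) (u : {ffun X -> 'I_3}) := [set x | u x != ord0].

Lemma hammingE (X : finType) (u v : {ffun X -> 'I_3}) :
  hamming u v = #|support u :|: support v|
                - #|[set x in support u :&: support v | u x == v x]|.
Proof.
set E := [set x in _ | _].
have E_sub : E \subset support u :|: support v.
  by apply/subsetP => x; rewrite !inE => /andP [/andP [-> _] _].
rewrite -(setIidPr E_sub) -cardsD /hamming; apply: eq_card => x; rewrite !inE.
have [ux|ux] := eqVneq (u x) ord0; have [vx|vx] := eqVneq (v x) ord0; rewrite ?ux ?vx //=.
- by rewrite eq_sym.
- by rewrite andbT.
Qed.

Definition place (S : finType) (r c : S) (b : bool) (j : nat) (s : S) : S * 'I_6 :=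
  (s, inord (slot (role r c s) b j)).

Definition codeword (S : finType) (r c : S) p b (j : 'I_6) : {ffun S * 'I_6 -> 'I_3} :=
  [ffun z => if (z.1 \in block r c p) && (val z.2 == slot (role r c z.1) b j)
             then inord (entry (role r c z.1) b) else ord0].

Lemma slot_lt6 a b j : slot a b j < 6.
Proof. exact: ltn_pmod. Qed.

Lemma entry_gt0 a b : 0 < entry a b.
Proof. by rewrite /entry; case: ifP. Qed.

Lemma entry_lt3 a b : entry a b < 3.
Proof. by rewrite /entry; case: ifP. Qed.

Lemma place_inj (S : finType) (r c : S) b j : injective (place r c b j).
Proof. by move=> s s' []. Qed.

Lemma codeword_level (S : finType) (r c : S) p b (j : 'I_6) k : 0 < k ->
  [set z | val (codeword r c p b j z) == k]
    = place r c b j @: [set s in block r c p | entry (role r c s) b == k].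
Proof.
move=> k_gt0; apply/setP => -[s i]; rewrite inE ffunE /=; apply/idP/imsetP.
  case: ifP => [/andP [bs /eqP iE] | _ /eqP k0]; last by rewrite -k0 in k_gt0.
  rewrite inordK ?entry_lt3 // => ek; exists s; first by rewrite inE bs.
  by apply/eqP; rewrite xpair_eqE eqxx -(inj_eq val_inj) /= inordK ?slot_lt6 ?iE.
move=> [s' + [-> ->]]; rewrite inE /= inordK ?slot_lt6 // => /andP [-> ek].
by rewrite eqxx inordK ?entry_lt3.
Qed.

Lemma support_codeword (S : finType) (r c : S) p b (j : 'I_6) :
  support (codeword r c p b j) = place r c b j @: block r c p.
Proof.
apply/setP => -[s i]; rewrite inE ffunE /=; apply/idP/imsetP.
  case: ifP => [/andP [bs /eqP iE] _ | _]; last by rewrite eqxx.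
  exists s => //; apply/eqP.
  by rewrite xpair_eqE eqxx -(inj_eq val_inj) /= inordK ?slot_lt6 ?iE.
move=> [s' bs' [-> ->]]; rewrite bs' /= inordK ?slot_lt6 // eqxx.
by rewrite -(inj_eq val_inj) /= inordK ?entry_lt3 // -lt0n entry_gt0.
Qed.

Lemma codeword_place (S : finType) (r c : S) p b (j : 'I_6) s : s \in block r c p ->
  codeword r c p b j (place r c b j s) = inord (entry (role r c s) b).
Proof. by move=> bs; rewrite ffunE /= bs inordK ?slot_lt6 ?eqxx. Qed.

Lemma block_rowcolE (S : finType) (r c : S) (p : {set S}) :
  [set s in block r c p | role r c s != 2] = [set r; c].
Proof.
apply/setP => s; rewrite !inE /role.
by case: (s == r); case: (s == c); case: (s \in p).
Qed.

Section Codewords.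
Variables (S : finType) (P : {set {set S}}) (F : S -> S -> option {set S}).
Hypotheses (frameF : room_frame P F) (skewF : skew F).

Lemma block_symE r c p : F r c = Some p -> [set s in block r c p | role r c s == 2] = p.
Proof.
move=> E; apply/setP => s; rewrite !inE /role.
case: (eqVneq s r) => [->|_]; first by rewrite (negbTE (cell_row_notin frameF skewF E)).
case: (eqVneq s c) => [->|_]; first by rewrite (negbTE (cell_col_notin frameF skewF E)).
by rewrite andbT.
Qed.

Lemma codeword_composition r c p b j :
  F r c = Some p -> has_composition (codeword r c p b j) 2 2.
Proof.
move=> E; rewrite /has_composition !codeword_level // !card_imset //; try exact: place_inj.
have sym2 : #|[set s in block r c p | role r c s == 2]| = 2.
  by rewrite (block_symE E) (cell_pair_card frameF E).
have rowcol2 : #|[set s in block r c p | role r c s != 2]| = 2.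
  by rewrite block_rowcolE cards2 (cell_neq frameF E).
case: b; split; [rewrite -[RHS]sym2 | rewrite -[RHS]rowcol2 | rewrite -[RHS]rowcol2
  | rewrite -[RHS]sym2]; apply: eq_card => s; rewrite !inE /entry; by case: (role r c s == 2).
Qed.

Lemma card_support_codeword r c p b j :
  F r c = Some p -> #|support (codeword r c p b j)| = 4.
Proof.
move=> E; rewrite support_codeword card_imset ?(card_block frameF skewF E) //.
exact: place_inj.
Qed.

Lemma codeword_group r c p b j B : trivIset P -> F r c = Some p -> B \in P ->
  #|[set z in setX B [set: 'I_6] | val (codeword r c p b j z) != 0]| <= 1.
Proof.
move=> trivP E PB.
have supp z : val (codeword r c p b j z) != 0 -> z \in place r c b j @: block r c p.
  by move=> nz; rewrite -support_codeword inE -(inj_eq val_inj).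
apply/card_le1_eqP => z z'; rewrite !inE.
move=> /andP [/andP [Bs _] /supp/imsetP [s bs zE]] /andP [/andP [Bs' _] /supp/imsetP [s' bs' z'E]].
subst z z'; have [-> // | ss'] := eqVneq s s'.
by move: (block_off_part frameF skewF E bs bs' ss'); rewrite (same_part_mem trivP PB Bs Bs').
Qed.

Section TwoCodewords.
Variables (r c r' c' : S) (p p' : {set S}) (b b' : bool) (j j' : 'I_6).
Hypotheses (E : F r c = Some p) (E' : F r' c' = Some p').
Hypothesis index_neq : (r, c, b, j) != (r', c', b', j').

Definition shared := [set s in block r c p :&: block r' c' p' |
                      slot (role r c s) b j == slot (role r' c' s) b' j'].

Lemma same_cell_index : (r, c) = (r', c') ->
  [/\ r' = r, c' = c, p' = p & (b, val j) != (b', val j')].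
Proof.
move=> [rr cc]; move: E'; rewrite -rr -cc E => -[<-]; split => //.
by apply: contra index_neq => /eqP [-> /val_inj ->]; rewrite rr cc.
Qed.

Lemma pair_class_neq s1 s2 : (r, c) != (r', c') ->
  s1 \in shared -> s2 \in shared -> s1 != s2 ->
  pair_class (role r c s1) (role r c s2) != pair_class (role r' c' s1) (role r' c' s2).
Proof.
move=> rcN /setIdP [/setIP [b1 b1'] _] /setIdP [/setIP [b2 b2'] _] s12.
by apply: contra rcN => /eqP /(pair_class_cell frameF skewF E E' b1 b2 b1' b2' s12) ->.
Qed.

Lemma card_shared : #|shared| <= 2.
Proof.
rewrite leqNgt; apply/card_gt2P => -[s1 [s2 [s3 [[h1 h2 h3] [n12 n23 n31]]]]].
have n13 : s1 != s3 by rewrite eq_sym.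
have := triple_pattern b b' (role_lt3 r c s1) (role_lt3 r c s2) (role_lt3 r c s3)
  (role_lt3 r' c' s1) (role_lt3 r' c' s2) (role_lt3 r' c' s3) (ltn_ord j) (ltn_ord j').
rewrite /triple_pattern_ok; move: (h1) (h2) (h3).
move=> /setIdP [/setIP [b1 b1'] ->] /setIdP [/setIP [b2 b2'] ->] /setIdP [/setIP [b3 b3'] ->].
rewrite (block_valid_roles b1 b2 n12) (block_valid_roles b1 b3 n13).
rewrite (block_valid_roles b2 b3 n23) (block_valid_roles b1' b2' n12).
rewrite (block_valid_roles b1' b3' n13) (block_valid_roles b2' b3' n23).
rewrite (block_not_all_sym frameF E b1 b2 b3 n12 n13 n23).
rewrite (block_not_all_sym frameF E' b1' b2' b3' n12 n13 n23) /=.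
have [rcE | rcN] := eqVneq (r, c) (r', c').
  by case: (same_cell_index rcE) => -> -> _ ->; rewrite !eqxx.
by rewrite !pair_class_neq // orbT.
Qed.

Lemma shared_entry_neq s1 s2 : s1 \in shared -> s2 \in shared -> s1 != s2 ->
  entry (role r c s1) b != entry (role r' c' s1) b'.
Proof.
move=> h1 h2 n12.
have := pair_pattern b b' (role_lt3 r c s1) (role_lt3 r c s2) (role_lt3 r' c' s1)
  (role_lt3 r' c' s2) (ltn_ord j) (ltn_ord j').
rewrite /pair_pattern_ok; move: (h1) (h2).
move=> /setIdP [/setIP [b1 b1'] ->] /setIdP [/setIP [b2 b2'] ->].
rewrite (block_valid_roles b1 b2 n12) (block_valid_roles b1' b2' n12) /=.
have [rcE | rcN] := eqVneq (r, c) (r', c').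
  by case: (same_cell_index rcE) => -> -> _ ->; rewrite !eqxx => /implyP; apply.
by rewrite pair_class_neq // orbT => /implyP; apply.
Qed.

Lemma support_codewordI : support (codeword r c p b j) :&: support (codeword r' c' p' b' j')
  = place r c b j @: shared.
Proof.
rewrite !support_codeword; apply/setP => z; apply/setIP/imsetP.
  move=> [/imsetP [s bs ->] /imsetP [s' bs' [ss' e]]]; subst s'.
  exists s => //; apply/setIdP; split; first exact/setIP.
  by move/(congr1 val): e; rewrite /= !inordK ?slot_lt6 // => ->.
move=> [s /setIdP [/setIP [bs bs'] /eqP e] ->]; split; apply/imsetP; exists s => //.
by rewrite /place e.
Qed.

Lemma place_shared s : s \in shared -> place r' c' b' j' s = place r c b j s.
Proof. by case/setIdP => _ /eqP e; rewrite /place e. Qed.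

Lemma shared_codeword_neq z : #|shared| = 2 -> z \in place r c b j @: shared ->
  codeword r c p b j z != codeword r' c' p' b' j' z.
Proof.
move=> /eqP/cards2P [x [y [xy shE]]] /imsetP [s sh ->].
have [s2 [sh2 s2s]] : exists s2, s2 \in shared /\ s != s2.
  move: sh; rewrite shE !inE => /orP [] /eqP ->; [exists y | exists x];
    by split; rewrite ?inE ?eqxx ?orbT // eq_sym.
have /setIdP [/setIP [bs bs'] _] := sh.
rewrite -{2}(place_shared sh) !codeword_place //.
apply: contra (shared_entry_neq sh sh2 s2s) => /eqP /(congr1 (@nat_of_ord 3)).
by rewrite !inordK ?entry_lt3 // => ->.
Qed.

Lemma codeword_distance :
  6 <= hamming (codeword r c p b j) (codeword r' c' p' b' j').
Proof.
set w := codeword r c p b j; set w' := codeword r' c' p' b' j'.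
have cardI : #|support w :&: support w'| = #|shared|.
  by rewrite support_codewordI card_imset //; exact: place_inj.
rewrite hammingE cardsU !(card_support_codeword _ _ E, card_support_codeword _ _ E') cardI.
set agree := [set z in _ | _].
have agree_le : #|agree| <= #|shared|.
  by rewrite -cardI; apply/subset_leq_card/subsetP => z /setIdP [].
have [shared2 | shared_neq2] := eqVneq #|shared| 2.
  suff -> : agree = set0 by rewrite shared2 cards0.
  apply/setP => z; rewrite inE [RHS]inE support_codewordI.
  by apply/negbTE/andP => -[/(shared_codeword_neq shared2)/negbTE ->].
have := card_shared; rewrite leq_eqVlt (negbTE shared_neq2) /=.
by move: agree_le; move: #|agree| #|shared| => a sh; lia.
Qed.
End TwoCodewords.
End Codewords.

Section Groups.
Variables (S : finType) (P : {set {set S}}).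
Hypothesis partP : partition P [set: S].

Definition groups : {set {set S * 'I_6}} := [set setX B [set: 'I_6] | B in P].

Lemma partition_groups : partition groups [set: S * 'I_6].
Proof.
case/and3P: partP => /eqP coverP trivP P0; apply/and3P; split.
- apply/eqP/setP => -[s i]; rewrite inE; apply/bigcupP.
  have /bigcupP [B PB sB] : s \in cover P by rewrite coverP inE.
  by exists (setX B [set: 'I_6]); [exact: imset_f | rewrite in_setX sB in_setT].
- apply/trivIsetP => _ _ /imsetP [B PB ->] /imsetP [B' PB' ->] BB'.
  have : [disjoint B & B'].
    by apply: (trivIsetP trivP) => //; apply: contraNneq BB' => ->.
  move/disjoint_setI0/setP => disjBB'; rewrite -setI_eq0; apply/set0Pn => -[[s i]].
  by rewrite !inE /= !andbT => /andP [sB sB']; move: (disjBB' s); rewrite !inE sB sB'.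
- apply/imsetP => -[B PB /setP X0].
  have /set0Pn [s sB] : B != set0 by apply: contraNneq P0 => <-.
  by move: (X0 (s, ord0)); rewrite !inE /= sB.
Qed.

Lemma groups_type t u : has_type P t u -> has_type groups (6 * t) u.
Proof.
move=> [cardP cardB]; split.
  rewrite card_in_imset ?cardP // => B B' _ _ /setP BB'; apply/setP => s.
  by move: (BB' (s, ord0)); rewrite !inE /= !andbT.
by move=> _ /imsetP [B PB ->]; rewrite cardsX cardB // cardsT card_ord mulnC.
Qed.

Lemma card_cross t u : has_type P t u -> #|cross P| = u * t * (u * t - t).
Proof.
move=> [cardP cardB]; case/and3P: partP => /eqP coverP trivP _.
have cardS : #|S| = u * t.
  by rewrite -cardsT (card_uniform_partition (n := t) _ partP) ?cardP.
have other_parts s : #|[set x | ~~ same_part P s x]| = u * t - t.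
  have sP : pblock P s \in P by rewrite pblock_mem // coverP inE.
  have -> : [set x | ~~ same_part P s x] = ~: pblock P s.
    by apply/setP => x; rewrite !inE /same_part eq_pblock // coverP inE.
  by rewrite cardsCs setCK cardS cardB.
rewrite card_cross_rows -{1}cardS -sum_nat_const.
by apply: eq_big => // s _; rewrite sum1dep_card other_parts.
Qed.
End Groups.

Section Code.
Variables (S : finType) (P : {set {set S}}) (F : S -> S -> option {set S}).
Hypotheses (frameF : room_frame P F) (skewF : skew F).

Definition code_index := [set a : S * S * bool * 'I_6 | F a.1.1.1 a.1.1.2 != None].

Definition indexed_codeword (a : S * S * bool * 'I_6) :=
  let: (r, c, b, j) := a in codeword r c (odflt set0 (F r c)) b j.

Definition code := indexed_codeword @: code_index.

Lemma indexed_codeword_distance a a' : a \in code_index -> a' \in code_index ->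
  a != a' -> 6 <= hamming (indexed_codeword a) (indexed_codeword a').
Proof.
case: a a' => [[[r c] b] j] [[[r' c'] b'] j']; rewrite !inE /=.
case E: (F r c) => [p|] // _; case E': (F r' c') => [p'|] //= _.
exact: (codeword_distance frameF skewF E E').
Qed.

Lemma card_code : #|code| = 12 * #|filled F|.
Proof.
rewrite card_in_imset; last first.
  move=> a a' ia ia' eq_aa'; have [// | /(indexed_codeword_distance ia ia')] := eqVneq a a'.
  by rewrite eq_aa' /hamming (eq_card (B := pred0)) ?card0 // => z; rewrite !inE eqxx.
have -> : code_index = setX (setX (filled F) [set: bool]) [set: 'I_6].
  by apply/setP => -[[[r c] b] j]; rewrite !inE /= !andbT.
by rewrite !cardsX !cardsT card_bool card_ord -mulnA mulnC.
Qed.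

Lemma code_GDC : partition P [set: S] -> is_GDC (groups P) code 2 2 6.
Proof.
move=> partP; split.
- exact: partition_groups.
- move=> _ /imsetP [[[[r c] b] j] + ->]; rewrite inE /=.
  by case E: (F r c) => [p|] //= _; apply: (codeword_composition frameF skewF b j E).
- move=> _ _ /imsetP [a ia ->] /imsetP [a' ia' ->] neq.
  by apply: indexed_codeword_distance => //; apply: contraNneq neq => ->.
- move=> _ _ /imsetP [[[[r c] b] j] + ->] /imsetP [B PB ->]; rewrite inE /=.
  case E: (F r c) => [p|] //= _.
  by apply: (codeword_group frameF skewF b j _ E PB); case/and3P: partP.
Qed.
End Code.

Theorem mainTheorem5 (t u : nat) :
  (exists (S : finType) (P : {set {set S}}) (F : S -> S -> option {set S}),
      partition P [set: S] /\ has_type P t u /\ room_frame P F /\ skew F) ->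
  exists (X : finType) (G : {set {set X}}) (C : {set {ffun X -> 'I_3}}),
    is_GDC G C 2 2 6 /\ has_type G (6 * t) u /\ #|C| = 6 * t ^ 2 * u * (u - 1).
Proof.
move=> [S [P [F [partP [typeP [frameF skewF]]]]]].
exists (S * 'I_6)%type, (groups P), (code F); split; [|split].
- exact: (code_GDC frameF skewF).
- exact: groups_type.
- have := card_filled frameF skewF; rewrite (card_cross partP typeP) (card_code frameF skewF).
  nia.
Qed.
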